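(* Let $\mathcal{H}_n$ be an $n$-dimensional Hilbert space and let $F=\{f_i\}_{i=1}^N$ be a uniform normalized tight frame (UNTF) for $\mathcal{H}_n$. For $p>2$, the canonical dual $\{S_F^{-1}f_i\}_{i=1}^N$ of $F$ is the unique $1$-erasure Frobenius-optimal dual frame of $F$, i.e. $\zeta_{\mathfrak{F}}^{(1),p}(F)=\{S_F^{-1}F\}$. Consequently, it is also the unique $m$-erasure Frobenius-optimal dual frame of $F$, i.e. $\zeta_{\mathfrak{F}}^{(m),p}(F)=\{S_F^{-1}F\}$, for all $m\ge 1$.
   Context: A finite sequence $F=\{f_i\}_{i=1}^N$ in $\mathcal{H}_n$ is a frame if there are $0<A'\le B'$ with $A'\|f\|^2\le\sum_i|\langle f,f_i\rangle|^2\le B'\|f\|^2$ for all $f$; it is tight if one can take $A'=B'$ and Parseval if $A'=B'=1$. A uniform normalized tight frame (UNTF) is a Parseval frame all of whose vectors have the same norm (so $\|f_i\|^2=n/N$ and $S_F=I$). The analysis operator is $T_F:\mathcal{H}_n\to\mathbb{C}^N$, $T_Ff=(\langle f,f_i\rangle)_{i=1}^N$, with adjoint $T_F^*(c_i)=\sum_i c_if_i$; the frame operator is $S_F=T_F^*T_F$, and $S_F^{-1}F=\{S_F^{-1}f_i\}$ is the canonical dual. $G=\{g_i\}_{i=1}^N$ is a dual of $F$ if $T_G^*T_F=I$, i.e. $f=\sum_i\langle f,f_i\rangle g_i$ for all $f$. For $1\le m\le N$ let $\mathcal{D}^{(m)}$ be the set of $N\times N$ diagonal matrices with exactly $m$ diagonal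 entries equal to $1$ and the others $0$. For $p>1$ and a dual $G$ define \[\mathrm{AE}_{\mathfrak{F}}^{(m),p}(F,G)=\Big\{\tbinom{N}{m}^{-1}\sum_{D\in\mathcal{D}^{(m)}}\|T_G^*DT_F\|_{\mathfrak{F}}^p\Big\}^{1/p},\] where $\|\cdot\|_{\mathfrak{F}}$ is the Frobenius (Hilbert–Schmidt) norm; for $m=1$ this equals $\{\frac1N\sum_i(\|f_i\|\|g_i\|)^p\}^{1/p}$. Set $\mathrm{AE}_{\mathfrak{F}}^{(1),p}(F)=\inf\{\mathrm{AE}_{\mathfrak{F}}^{(1),p}(F,G): G\text{ dual of }F\}$ and $\zeta_{\mathfrak{F}}^{(1),p}(F)$ the set of duals attaining it ($1$-erasure Frobenius-optimal duals). Recursively, for $k>1$, $\mathrm{AE}_{\mathfrak{F}}^{(k),p}(F)=\inf\{\mathrm{AE}_{\mathfrak{F}}^{(k),p}(F,G):G\in\zeta_{\mathfrak{F}}^{(k-1),p}(F)\}$ and $\zeta_{\mathfrak{F}}^{(k),p}(F)=\{G\in\zeta_{\mathfrak{F}}^{(k-1),p}(F):\mathrm{AE}_{\mathfrak{F}}^{(k),p}(F,G)=\mathrm{AE}_{\mathfrak{F}}^{(k),p}(F)\}$ ($k$-erasure Frobenius-optimal duals). *)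

From HB Require Import structures.
From mathcomp Require Import all_boot all_order all_algebra.
From mathcomp Require Import classical_sets boolp reals exp.
From mathcomp Require Import complex.
Set Implicit Arguments. Unset Strict Implicit. Unset Printing Implicit Defensive.
Import Order.TTheory GRing.Theory Num.Theory.
Local Open Scope ring_scope.
Local Open Scope classical_set_scope.

Section Frames.
Variables (R : realType) (n N : nat).
Local Notation C := (R[i]).
(* H_n = C^n, vectors are row vectors; a family of N vectors is indexed by 'I_N *)
Definition vec := 'rV[C]_n.

Definition cabs (z : C) : R := Num.sqrt (complex.Re z ^+ 2 + complex.Im z ^+ 2).
Definition vfam := 'I_N -> vec.

Definition inner (f g : vec) : C := \sum_(k < n) f ord0 k * conjc (g ord0 k).
Definition normsq (f : vec) : R := \sum_(k < n) (cabs (f ord0 k)) ^+ 2.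
Definition vnorm (f : vec) : R := Num.sqrt (normsq f).

Definition is_frame (F : vfam) : Prop :=
  exists A B : R, [/\ 0 < A, A <= B &
    forall f : vec,
      A * normsq f <= \sum_(i < N) (cabs (inner f (F i))) ^+ 2 /\
      \sum_(i < N) (cabs (inner f (F i))) ^+ 2 <= B * normsq f].

Definition is_parseval (F : vfam) : Prop :=
  is_frame F /\
  forall f : vec, \sum_(i < N) (cabs (inner f (F i))) ^+ 2 = normsq f.

Definition is_UNTF (F : vfam) : Prop :=
  is_parseval F /\ forall i j : 'I_N, vnorm (F i) = vnorm (F j).

Definition analysis (F : vfam) (f : vec) : 'rV[C]_N :=
  \row_(i < N) inner f (F i).
Definition synthesis (G : vfam) (c : 'rV[C]_N) : vec :=
  \sum_(i < N) c ord0 i *: G i.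

Definition is_dual (F G : vfam) : Prop :=
  forall f : vec, synthesis G (analysis F f) = f.

(* The n x n matrix of an operator on C^n in the row-vector convention
   (f |-> f *m M), with M j k = k-th coordinate of the image of e_j. *)
Definition opmx (A : vec -> vec) : 'M[C]_n :=
  \matrix_(j < n, k < n) A (delta_mx ord0 j) ord0 k.

Definition frame_op (F : vfam) : 'M[C]_n :=
  opmx (fun f => synthesis F (analysis F f)).
Definition canonical_dual (F : vfam) : vfam :=
  fun i => F i *m invmx (frame_op F).

Definition frob (M : 'M[C]_n) : R :=
  Num.sqrt (\sum_(j < n) \sum_(k < n) (cabs (M j k)) ^+ 2).

Definition diagS (S : {set 'I_N}) : 'M[C]_N :=
  \matrix_(i < N, j < N) (if (i == j) && (i \in S) then 1 else 0).

Definition erasure_op (F G : vfam) (S : {set 'I_N}) : 'M[C]_n :=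
  opmx (fun f => synthesis G (analysis F f *m diagS S)).

(* AE^{(m),p}_F(F, G); D ranges over D^{(m)}, i.e. over subsets S with #|S| = m *)
Definition AE (m : nat) (p : R) (F G : vfam) : R :=
  ((('C(N, m))%:R)^-1 *
     \sum_(S : {set 'I_N} | #|S| == m) (frob (erasure_op F G S)) `^ p) `^ (p^-1).

(* zeta^{(k),p}(F) : k-erasure Frobenius-optimal duals, defined recursively;
   zeta_opt 0 is the set of all duals, so that zeta_opt 1 is the set of duals
   attaining AE^{(1),p}(F) = inf over duals, and for k > 1 zeta_opt k is the
   set of G in zeta_opt (k-1) attaining inf over zeta_opt (k-1) of AE^{(k),p}. *)
Fixpoint zeta_opt (p : R) (F : vfam) (k : nat) : set vfam :=
  match k with
  | 0 => [set G | is_dual F G]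
  | k'.+1 =>
      [set G | zeta_opt p F k' G /\
               AE k'.+1 p F G = inf [set AE k'.+1 p F G' | G' in zeta_opt p F k']]
  end.

End Frames.

(* A dual G of a Parseval frame F satisfies sum_i <g_i, f_i> = n = sum_i ||f_i||^2, hence
   sum_i ||g_i - f_i||^2 = sum_i ||g_i||^2 - sum_i ||f_i||^2: among all duals, F = S_F^-1 F
   strictly minimises sum_i ||g_i||^2.  For a UNTF every ||f_i||^2 equals c = n / N, and
   AE^(1),p(F, G)^p is the mean of (c ||g_i||^2)^(p/2).  Since t |-> t^(p/2) is strictly convex
   for p > 2, comparing it with its tangent at c^2 bounds that mean from below by its value at
   G = F plus a positive multiple of sum_i ||g_i||^2 - sum_i ||f_i||^2.  So F is the unique
   1-erasure optimal dual, and every later optimal set, a subset of a singleton containing F,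
   is {F} as well. *)

From Pilot Require Import Defs.
From HB Require Import structures.
From mathcomp Require Import all_boot all_order all_algebra.
From mathcomp Require Import classical_sets boolp reals exp.
From mathcomp Require Import complex.
From mathcomp Require Import ring lra.
Import Order.TTheory GRing.Theory Num.Theory.
Local Open Scope ring_scope.
Local Open Scope classical_set_scope.
Set Implicit Arguments. Unset Strict Implicit. Unset Printing Implicit Defensive.

Section HermitianForm.
Variables (R : rcfType) (V : lmodType R[i]) (B : V -> V -> R[i]).
Hypotheses (BDl : forall u v w, B (u + v) w = B u w + B v w)
  (BZl : forall a u w, B (a *: u) w = a * B u w)
  (B_conj : forall u v, B v u = conjc (B u v)).

Lemma hermitian_form_eq0 : (forall v, B v v = 0) -> forall u v, B u v = 0.
Proof.
move=> B0 u v.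
have BDr w x y : B w (x + y) = B w x + B w y by rewrite B_conj BDl rmorphD /= -!B_conj.
have BZr w a x : B w (a *: x) = conjc a * B w x by rewrite B_conj BZl rmorphM /= -B_conj.
have sum_eq0 : B u v + B v u = 0.
  by have := B0 (u + v); rewrite BDl !BDr !B0 add0r addr0.
have i_neq0 : 'i%C != 0 :> R[i] by rewrite eq_complex /= oner_eq0 andbF.
have B_vu : B v u = B u v.
  have := B0 (u + 'i%C *: v); rewrite BDl !BDr !BZl !BZr !B0 !mulr0 add0r addr0.
  have -> : conjc 'i%C = - 'i%C :> R[i] by apply/eqP; rewrite eq_complex /= oppr0 !eqxx.
  rewrite mulNr addrC -mulrBr => /eqP; rewrite mulf_eq0 (negbTE i_neq0) /=.
  by rewrite subr_eq0 => /eqP.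
by move/eqP: sum_eq0; rewrite B_vu -mulr2n -mulr_natl mulf_eq0 pnatr_eq0 /= => /eqP.
Qed.

End HermitianForm.

Section PowerConvexity.
Variable R : realType.

Lemma powR_tangent (a x r : R) : 0 < a -> 0 <= x -> 1 < r ->
  a `^ r + r * a `^ (r - 1) * (x - a) <= x `^ r.
Proof.
move=> a_gt0 x_ge0 r_gt1; have r_gt0 : 0 < r by apply: lt_trans r_gt1.
have r1_gt0 : 0 < r - 1 by rewrite subr_gt0.
set q := r / (r - 1); have q_gt0 : 0 < q by rewrite divr_gt0.
have pq : r^-1 + q^-1 = 1 by rewrite invf_div; field; rewrite gt_eqF.
(* Young's inequality for the conjugate exponents r and r / (r - 1) *)
have young : x * a `^ (r - 1) <= x `^ r / r + a `^ r / q.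
  have <- : (a `^ (r - 1)) `^ q = a `^ r by rewrite -powRrM /q mulrC divfK // gt_eqF.
  by apply: conjugate_powR; rewrite ?powR_ge0.
have young_r : r * (x * a `^ (r - 1)) <= x `^ r + (r - 1) * a `^ r.
  have -> : x `^ r + (r - 1) * a `^ r = r * (x `^ r / r + a `^ r / q).
    by rewrite /q; field; rewrite !gt_eqF.
  exact: ler_wpM2l (ltW r_gt0) _ _ young.
have ar : a `^ (r - 1) * a = a `^ r by rewrite mulrC mulr_powRB1 // ltW.
have -> : r * a `^ (r - 1) * (x - a) = r * (x * a `^ (r - 1)) - r * a `^ r.
  by rewrite -ar; ring.
lra.
Qed.

Lemma sum_powR_gt (I : finType) (a r : R) (x : I -> R) :
  0 < a -> 1 < r -> (forall i, 0 <= x i) -> 0 < \sum_i (x i - a) ->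
  \sum_(i : I) a `^ r < \sum_i x i `^ r.
Proof.
move=> a_gt0 r_gt1 x_ge0 sum_gt0.
have k_gt0 : 0 < r * a `^ (r - 1) by rewrite mulr_gt0 ?powR_gt0 // (lt_trans ltr01).
apply: (lt_le_trans _ (ler_sum _ (fun i _ => powR_tangent a_gt0 (x_ge0 i) r_gt1))).
by rewrite big_split /= -mulr_sumr ltrDl mulr_gt0.
Qed.

End PowerConvexity.

Section StrictMinimum.
Variables (T : Type) (R : realType) (S : set T) (f : T -> R) (x0 : T).
Hypothesis Sx0 : S x0.

Lemma inf_image_min : (forall y, S y -> f x0 <= f y) -> inf (f @` S) = f x0.
Proof.
move=> x0_min; have lb_fx0 : lbound (f @` S) (f x0) by move=> _ [y Sy <-]; apply: x0_min.
apply/eqP; rewrite eq_le lb_le_inf ?andbT //; last by exists (f x0), x0.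
by apply: (ge_inf (ex_intro _ _ lb_fx0)); exists x0.
Qed.

Lemma strict_argmin_set1 : (forall y, S y -> y <> x0 -> f x0 < f y) ->
  [set y | S y /\ f y = inf (f @` S)] = [set x0].
Proof.
move=> x0_strict; rewrite inf_image_min; last first.
  by move=> y Sy; case: (pselect (y = x0)) => [->|/(x0_strict y Sy)/ltW].
apply/seteqP; split=> [y [Sy fy]|_ ->] //=; apply: contrapT => /(x0_strict y Sy).
by rewrite fy ltxx.
Qed.

End StrictMinimum.

Lemma big_card1 (T : finType) (V : nmodType) (h : {set T} -> V) :
  \sum_(S : {set T} | #|S| == 1%N) h S = \sum_x h [set x]%SET.
Proof.
rewrite -(big_imset _ (in2W set1_inj)); apply: eq_bigl => S.
by apply/cards1P/imsetP => [[x ->]|[x _ ->]]; exists x.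
Qed.

Lemma mx_neq0_width_gt0 (T : nmodType) k m (A : 'M[T]_(k, m)) : A != 0 -> (0 < m)%N.
Proof. by case: m A => // A; rewrite thinmx0 eqxx. Qed.

Section Frames.
Variables (R : realType) (n N : nat).
Local Notation C := R[i].
Local Notation vec := (vec R n).
Local Notation vfam := (vfam R n N).
Local Notation inner := (@inner R n).
Local Notation normsq := (@normsq R n).
Implicit Types (f g h : vec) (F G : vfam).

Lemma cabs_sqrE (z : C) : (cabs z ^+ 2)%:C%C = z * conjc z.
Proof.
case: z => a b; rewrite /cabs /= sqr_sqrtr ?addr_ge0 ?sqr_ge0 //.
by rewrite /conjc /GRing.mul /=; congr Complex; ring.
Qed.

Lemma normsqE f : (normsq f)%:C%C = inner f f.
Proof. by rewrite rmorph_sum; apply: eq_bigr => k _; apply: cabs_sqrE. Qed.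

Lemma normsq_ge0 f : 0 <= normsq f.
Proof. by apply: sumr_ge0 => k _; rewrite sqr_ge0. Qed.

Lemma cabs_eq0 (z : C) : (cabs z == 0) = (z == 0).
Proof.
have normE : (cabs z)%:C%C = `|z| by rewrite normc_def.
by rewrite -(inj_eq (@complexI R)) normE normr_eq0.
Qed.

Lemma normsq_eq0 f : (normsq f == 0) = (f == 0).
Proof.
rewrite psumr_eq0 => [|k _]; last exact: sqr_ge0.
apply/allP/eqP => [f0|-> k _]; last by rewrite mxE sqrf_eq0 cabs_eq0 eqxx.
apply/rowP => k; have /= := f0 k (mem_index_enum k).
by rewrite sqrf_eq0 cabs_eq0 mxE => /eqP.
Qed.

Lemma innerDl f g h : inner (f + g) h = inner f h + inner g h.
Proof. by rewrite -big_split; apply: eq_bigr => k _; rewrite mxE mulrDl. Qed.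

Lemma innerBl f g h : inner (f - g) h = inner f h - inner g h.
Proof. by rewrite -sumrB; apply: eq_bigr => k _; rewrite !mxE mulrBl. Qed.

Lemma innerZl a f h : inner (a *: f) h = a * inner f h.
Proof. by rewrite mulr_sumr; apply: eq_bigr => k _; rewrite mxE mulrA. Qed.

Lemma inner_conj f g : inner g f = conjc (inner f g).
Proof.
by rewrite rmorph_sum; apply: eq_bigr => k _; rewrite rmorphM /= conjcK mulrC.
Qed.

Lemma innerBr f g h : inner h (f - g) = inner h f - inner h g.
Proof. by rewrite inner_conj innerBl rmorphB /= -!inner_conj. Qed.

Lemma inner_deltal j f : inner (delta_mx ord0 j) f = conjc (f ord0 j).
Proof.
rewrite /Defs.inner (bigD1 j) //= big1 ?addr0 => [|k kj]; first by rewrite mxE !eqxx mul1r.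
by rewrite mxE (negbTE kj) andbF mul0r.
Qed.

Lemma inner_deltar j f : inner f (delta_mx ord0 j) = f ord0 j.
Proof. by rewrite inner_conj inner_deltal conjcK. Qed.

Lemma synthesisE G c k : synthesis G c ord0 k = \sum_i c ord0 i * G i ord0 k.
Proof. by rewrite summxE; apply: eq_bigr => i _; rewrite mxE. Qed.

Lemma dual_inner_sum F G : is_dual F G -> \sum_i inner (G i) (F i) = n%:R.
Proof.
move=> FG; transitivity (\sum_(k < n) (1 : C)); last by rewrite sumr_const card_ord.
rewrite /Defs.inner exchange_big; apply: eq_bigr => k _ /=.
have /(congr1 (fun v : vec => v ord0 k)) := FG (delta_mx ord0 k).
rewrite synthesisE mxE !eqxx /=; apply: etrans; apply: eq_bigr => i _.
by rewrite mxE inner_deltal mulrC.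
Qed.

Lemma parseval_self_dual F : is_parseval F -> is_dual F F.
Proof.
move=> [_ parsevalF].
pose B f g := \sum_i inner f (F i) * inner (F i) g - inner f g.
have B0 : forall u v, B u v = 0.
  apply: hermitian_form_eq0 => [u v w|a u w|u v|v].
  - rewrite /B innerDl; under eq_bigr do rewrite innerDl mulrDl.
    by rewrite big_split /=; ring.
  - rewrite /B innerZl; under eq_bigr do rewrite innerZl -mulrA.
    by rewrite -mulr_sumr mulrBr.
  - rewrite /B rmorphB rmorph_sum /= -inner_conj; congr (_ - _); apply: eq_bigr => i _.
    by rewrite rmorphM /= -!inner_conj mulrC.
  - rewrite /B -normsqE -parsevalF rmorph_sum; apply/eqP; rewrite subr_eq0.
    apply/eqP/eq_bigr => i _.
    by rewrite [inner (F i) v]inner_conj; symmetry; apply: cabs_sqrE.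
move=> f; apply/rowP => k; rewrite synthesisE -inner_deltar.
have /eqP := B0 f (delta_mx ord0 k); rewrite subr_eq0 => /eqP <-.
by apply: eq_bigr => i _; rewrite mxE inner_deltar.
Qed.

Lemma canonical_dual_parseval F : is_parseval F -> canonical_dual F = F.
Proof.
move=> /parseval_self_dual FF; rewrite /canonical_dual.
have -> : frame_op F = 1%:M by apply/matrixP => j k; rewrite !mxE FF mxE eqxx eq_sym.
by apply: funext => i; rewrite invmx1 mulmx1.
Qed.

Lemma parseval_sum_normsq F : is_parseval F -> \sum_i normsq (F i) = n%:R.
Proof.
move=> /parseval_self_dual/dual_inner_sum sumFF; apply: (@complexI R).
by rewrite rmorph_sum rmorph_nat /= -sumFF; apply: eq_bigr => i _; rewrite normsqE.
Qed.

Lemma dual_sum_normsq_sub F G : is_parseval F -> is_dual F G ->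
  \sum_i normsq (G i - F i) = \sum_i normsq (G i) - \sum_i normsq (F i).
Proof.
move=> parsevalF FG; apply: (@complexI R).
have sumGF := dual_inner_sum FG.
have sumFG : \sum_i inner (F i) (G i) = n%:R.
  by rewrite -(conjc_nat R n) -sumGF rmorph_sum; apply: eq_bigr => i _; rewrite inner_conj.
have sumFF := dual_inner_sum (parseval_self_dual parsevalF).
rewrite rmorphB !rmorph_sum /=.
under eq_bigr do rewrite normsqE innerBl !innerBr.
under [X in _ = X - _]eq_bigr do rewrite normsqE.
under [X in _ = _ - X]eq_bigr do rewrite normsqE.
by rewrite !sumrB sumGF sumFG sumFF; ring.
Qed.

Lemma UNTF_normsq_eq F i j : is_UNTF F -> normsq (F i) = normsq (F j).
Proof.
move=> [_ /(_ i j)]; rewrite /vnorm => /(congr1 (fun x => x ^+ 2)).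
by rewrite !sqr_sqrtr ?normsq_ge0.
Qed.

Lemma erasure_op_set1E F G i j k :
  erasure_op F G [set i]%SET j k = conjc (F i ord0 j) * G i ord0 k.
Proof.
rewrite mxE synthesisE (bigD1 i) //= big1 ?addr0 => [|l li].
  rewrite mxE (bigD1 i) //= big1 ?addr0 => [|l li].
    by rewrite !mxE eqxx set11 mulr1 inner_deltal.
  by rewrite !mxE (negbTE li) mulr0.
rewrite mxE big1 ?mul0r // => m _; rewrite !mxE inE.
by case: eqP => [->|]; rewrite ?(negbTE li) ?andbF /= ?mulr0.
Qed.

Lemma frob_erasure_op_set1 F G i :
  frob (erasure_op F G [set i]%SET) = Num.sqrt (normsq (F i) * normsq (G i)).
Proof.
rewrite /frob mulr_suml; congr Num.sqrt; apply: eq_bigr => j _.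
rewrite mulr_sumr; apply: eq_bigr => k _; rewrite erasure_op_set1E.
apply: (@complexI R); rewrite [RHS]rmorphM /= !cabs_sqrE rmorphM /= conjcK; ring.
Qed.

Lemma AE1E p F G :
  AE 1 p F G = (N%:R^-1 * \sum_i (normsq (F i) * normsq (G i)) `^ (p / 2)) `^ p^-1.
Proof.
rewrite /AE bin1 big_card1; congr ((_ * _) `^ _); apply: eq_bigr => i _.
by rewrite frob_erasure_op_set1 -powR12_sqrt ?mulr_ge0 ?normsq_ge0 // -powRrM [2^-1 * _]mulrC.
Qed.

Lemma AE1_ltr p F G G' : (0 < N)%N -> 0 < p ->
  \sum_i (normsq (F i) * normsq (G i)) `^ (p / 2) <
    \sum_i (normsq (F i) * normsq (G' i)) `^ (p / 2) ->
  AE 1 p F G < AE 1 p F G'.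
Proof.
move=> N_gt0 p_gt0 lt_sums; have Ninv_gt0 : 0 < N%:R^-1 :> R by rewrite invr_gt0 ltr0n.
have mean_ge0 H : N%:R^-1 * \sum_i (normsq (F i) * normsq (H i)) `^ (p / 2) \is Num.nneg.
  by rewrite nnegrE mulr_ge0 ?sumr_ge0 ?ltW // => i _; apply: powR_ge0.
by rewrite !AE1E gt0_ltr_powR ?invr_gt0 ?mean_ge0 ?ltr_pM2l.
Qed.

Lemma dual_sum_normsq_lt F G : is_parseval F -> is_dual F G -> G <> F ->
  \sum_i normsq (F i) < \sum_i normsq (G i).
Proof.
move=> parsevalF FG GF; rewrite -subr_gt0 -dual_sum_normsq_sub //.
have [i /eqP GFi] : exists i, G i <> F i by apply/existsNP => GF_eq; apply/GF/funext.
rewrite (bigD1 i) //= ltr_wpDr ?sumr_ge0 // => [j _|]; first exact: normsq_ge0.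
by rewrite lt_def normsq_eq0 subr_eq0 GFi normsq_ge0.
Qed.

Lemma UNTF_AE1_lt p F G : is_UNTF F -> 2 < p -> is_dual F G -> G <> F ->
  AE 1 p F F < AE 1 p F G.
Proof.
move=> UNTF_F p_gt2 FG GF; have parsevalF := UNTF_F.1.
have [i /eqP GFi] : exists i, G i <> F i by apply/existsNP => GF_eq; apply/GF/funext.
have n_gt0 : (0 < n)%N by apply: (@mx_neq0_width_gt0 _ _ _ (G i - F i)); rewrite subr_eq0.
set c := normsq (F i); have Fc j : normsq (F j) = c by apply: UNTF_normsq_eq.
have Nc : N%:R * c = n%:R.
  rewrite -(parseval_sum_normsq parsevalF) (eq_bigr _ (fun j _ => Fc j)).
  by rewrite sumr_const card_ord mulr_natl.
have c_gt0 : 0 < c.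
  rewrite lt_def normsq_ge0 andbT; apply: contra_eq_neq Nc => ->.
  by rewrite mulr0 eq_sym pnatr_eq0 -lt0n.
have sumGc_gt0 : 0 < \sum_j (normsq (G j) - c).
  by rewrite sumrB -(eq_bigr _ (fun j _ => Fc j)) subr_gt0 dual_sum_normsq_lt.
apply: AE1_ltr; [exact: leq_ltn_trans (leq0n i) (ltn_ord i) | lra |].
under eq_bigr do rewrite Fc; under [X in _ < X]eq_bigr do rewrite Fc.
apply: sum_powR_gt => [||j|]; first by rewrite mulr_gt0.
- lra.
- by rewrite mulr_ge0 ?normsq_ge0 ?ltW.
- by under eq_bigr do rewrite -mulrBr; rewrite -mulr_sumr mulr_gt0.
Qed.

End Frames.

Lemma zeta_opt_succ_set1 (R : realType) (n N : nat) p (F G0 : vfam R n N) k :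
  zeta_opt p F k = [set G0] -> zeta_opt p F k.+1 = [set G0].
Proof.
move=> zeta_k /=; rewrite zeta_k image_set1 inf1.
by apply/seteqP; split=> [G []|G ->].
Qed.

Unset Implicit Arguments.
Set Strict Implicit.

Theorem proposition3p1 (R : realType) (n N : nat) (F : vfam R n N) (p : R) :
  is_UNTF F -> 2 < p ->
  zeta_opt p F 1 = [set canonical_dual F] /\
  (forall m : nat, (1 <= m <= N)%N -> zeta_opt p F m = [set canonical_dual F]).
Proof.
move=> UNTF_F p_gt2; rewrite canonical_dual_parseval; last exact: UNTF_F.1.
have zeta1 : zeta_opt p F 1 = [set F].
  apply: strict_argmin_set1; first exact: parseval_self_dual UNTF_F.1.
  by move=> G FG GF; apply: UNTF_AE1_lt.
split=> // m /andP[m_gt0 _]; rewrite -(prednK m_gt0).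
by elim: m.-1 => // k; apply: zeta_opt_succ_set1.
Qed.
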